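(* Under the hypotheses of Lemma 3.5 (i.e., $\min\{d_1,\dots,d_{L-1}\}\ge d_{\min}$, $\bm\sigma^*\in\mathcal A_{\rm sort}\setminus\{\bm0\}$, $\mathrm{dist}(\bm W,\mathcal W_{\bm\sigma^*})<\sigma^*_{\min}/2$), for every $l\in[L]$, $$\big\|(\bm W_l\bm W_l^T)^{L-1}\bm W_l-\sqrt\lambda\,\bm W_{L:l+1}^T\bm Y\bm W_{l-1:1}^T+\lambda\bm W_l\big\|_F\le c_1\|\nabla G(\bm W)\|_F,$$ where $c_1:=\max_{l\in[L]}\Big\{\big(\tfrac{3\sigma^*_{\max}}{2}\big)^{2L-2}\frac{(L-l)(L-l+1)+(l-1)l}{2\sqrt2\lambda}+\tfrac12\Big\}$.
   Context: Same setting as Lemma 3.5: $G(\bm W)=\|\bm W_L\cdots\bm W_1-\sqrt\lambda\bm Y\|_F^2+\lambda\sum_l\|\bm W_l\|_F^2$ with $\bm Y$ the $d_L\times d_0$ matrix with diagonal $y_1\ge\dots\ge y_{d_{\min}}\ge0$; $\bm W_{i:j}=\bm W_i\cdots\bm W_j$ for $i\ge j$, with the conventions $\bm W_{0:1}=\bm I$ and $\bm W_{L:L+1}=\bm I$; $\mathcal A_{\rm sort}$, $\mathcal W_{\bm\sigma^*}$, $\sigma^*_{\min}$, $\sigma^*_{\max}$ defined as in Lemma 3.5: $\mathcal A=\{\bm a\in\mathbb R^{d_{\min}}:a_i^{2L-1}-\sqrt\lambda y_ia_i^{L-1}+\lambda a_i=0,a_i\ge0\}$, $\mathcal A_{\rm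 sort}$ = set of nonincreasing rearrangements of elements of $\mathcal A$, and $\mathcal W_{\bm\sigma^*}$ the set of tuples $\bm W_1=\bm Q_2\bm\Sigma_1\mathrm{BlkD}(\bm\Pi,\bm I)\mathrm{BlkD}(\bm O_1,\dots,\bm O_{p_Y+1})$, $\bm W_l=\bm Q_{l+1}\bm\Sigma_l\bm Q_l^T$, $\bm W_L=\mathrm{BlkD}(\bm O_1^T,\dots,\bm O_{p_Y}^T,\widehat{\bm O}_{p_Y+1}^T)\mathrm{BlkD}(\bm\Pi^T,\bm I)\bm\Sigma_L\bm Q_L^T$ with $\bm\Sigma_l$ having top-left block $\mathrm{diag}(\bm\sigma^* )$, $\bm\Pi$ a permutation with $\bm\Pi^T\bm\sigma^*\in\mathcal A$, and arbitrary orthogonal $\bm Q_l\in\mathcal O^{d_{l-1}}$, $\bm O_k\in\mathcal O^{h_k}$ (blocks matching the multiplicities $h_k$ of the distinct positive $y$'s), $\bm O_{p_Y+1}\in\mathcal O^{d_0-r_Y}$, $\widehat{\bm O}_{p_Y+1}\in\mathcal O^{d_L-r_Y}$. *)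

From HB Require Import structures.
From mathcomp Require Import all_boot all_order all_algebra all_fingroup.
From mathcomp Require Import reals.
Set Implicit Arguments. Unset Strict Implicit. Unset Printing Implicit Defensive.
Import Order.TTheory GRing.Theory Num.Theory.
Local Open Scope ring_scope.

(* Indexing convention: the paper's W_{k+1} is our [W k : 'M_(d k.+1, d k)],
   for k = 0, ..., L-1; d 0, ..., d L are the widths d_0, ..., d_L. *)

Definition dmin (L : nat) (d : nat -> nat) : nat := minn (d 0%N) (d L).

Definition mxn (R : realType) m n (A : 'M[R]_(m, n)) (i j : nat) : R :=
  match (insub i : option 'I_m), (insub j : option 'I_n) with
  | Some i', Some j' => A i' j'
  | _, _ => 0
  end.

Definition vn (R : realType) m (v : 'cV[R]_m) (i : nat) : R :=
  match (insub i : option 'I_m) with Some i' => v i' 0 | None => 0 end.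

Definition eye (R : realType) m n : 'M[R]_(m, n) := \matrix_(i, j) ((i : nat) == j)%:R.

(* prodW W j i = W_{i:j+1} in the paper's notation, i.e. W_i ... W_{j+1}
   (paper indices), for j <= i; prodW W i i = I. *)
Fixpoint prodW (R : realType) (d : nat -> nat) (W : forall k, 'M[R]_(d k.+1, d k))
  (j i : nat) {struct i} : 'M[R]_(d i, d j) :=
  match i as i0 return 'M[R]_(d i0, d j) with
  | 0 => eye R _ _
  | i'.+1 => if (j <= i')%N then W i' *m prodW W j i' else eye R _ _
  end.

Definition frob (R : realType) m n (A : 'M[R]_(m, n)) : R :=
  Num.sqrt (\sum_i \sum_j A i j ^+ 2).

(* Y : d_L x d_0, diagonal y_1, ..., y_{d_min} (our y 0, ..., y (dmin-1)) *)
Definition Ymx (R : realType) (L : nat) (d : nat -> nat) (y : nat -> R) : 'M[R]_(d L, d 0%N) :=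
  \matrix_(i, j) if ((i : nat) == j) && (i < dmin L d)%N then y i else 0.

(* gradient of G w.r.t. the paper's W_{k+1}:
   2 W_{L:k+2}^T (W_{L:1} - sqrt(lam) Y) W_{k:1}^T + 2 lam W_{k+1} *)
Definition gradk (R : realType) (L : nat) (d : nat -> nat) (lam : R) (y : nat -> R)
  (W : forall k, 'M[R]_(d k.+1, d k)) (k : nat) : 'M[R]_(d k.+1, d k) :=
  2 *: ((prodW W k.+1 L)^T *m (prodW W 0 L - Num.sqrt lam *: Ymx L d y) *m (prodW W 0 k)^T)
  + (2 * lam) *: W k.

Definition gradnorm (R : realType) (L : nat) (d : nat -> nat) (lam : R) (y : nat -> R)
  (W : forall k, 'M[R]_(d k.+1, d k)) : R :=
  Num.sqrt (\sum_(k < L) frob (gradk L lam y W k) ^+ 2).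

Definition lhsk (R : realType) (L : nat) (d : nat -> nat) (lam : R) (y : nat -> R)
  (W : forall k, 'M[R]_(d k.+1, d k)) (k : nat) : 'M[R]_(d k.+1, d k) :=
  ((W k *m (W k)^T) ^+ (L - 1)) *m W k
  - Num.sqrt lam *: ((prodW W k.+1 L)^T *m Ymx L d y *m (prodW W 0 k)^T)
  + lam *: W k.

Definition inA (R : realType) (L : nat) (d : nat -> nat) (lam : R) (y : nat -> R)
  (a : 'cV[R]_(dmin L d)) : Prop :=
  forall i : 'I_(dmin L d),
    a i 0 ^+ (2 * L - 1) - Num.sqrt lam * y i * a i 0 ^+ (L - 1) + lam * a i 0 = 0
    /\ 0 <= a i 0.

Definition inAsort (R : realType) (L : nat) (d : nat -> nat) (lam : R) (y : nat -> R)
  (sig : 'cV[R]_(dmin L d)) : Prop :=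
  (forall i j : 'I_(dmin L d), (i <= j)%N -> sig j 0 <= sig i 0) /\
  exists a, inA lam y a /\
    exists s : 'S_(dmin L d), forall i, sig i 0 = a (s i) 0.

Definition sigmax (R : realType) m (sig : 'cV[R]_m) : R := \big[Num.max/0]_(i < m) sig i 0.
Definition sigmin (R : realType) m (sig : 'cV[R]_m) : R :=
  \big[Num.min/(sigmax sig)]_(i < m | 0 < sig i 0) sig i 0.

Definition Sigmak (R : realType) (L : nat) (d : nat -> nat) (sig : 'cV[R]_(dmin L d)) (k : nat)
  : 'M[R]_(d k.+1, d k) :=
  \matrix_(i, j) if (i : nat) == j then vn sig i else 0.

Definition orth (R : realType) m (O : 'M[R]_m) : Prop := O *m O^T = 1%:M.

Definition yext (R : realType) (L : nat) (d : nat -> nat) (y : nat -> R) (i : nat) : R :=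
  if (i < dmin L d)%N then y i else 0.

(* O = BlkD(O_1, ..., O_{p_Y}, O_{p_Y+1}) block structure: blocks are the groups of
   (consecutive, since y is sorted) indices with equal positive y value, plus the
   block of the remaining indices (where y is zero / absent). *)
Definition blockdiag (R : realType) (L : nat) (d : nat -> nat) (y : nat -> R) m (O : 'M[R]_m) : Prop :=
  forall i j : 'I_m, O i j != 0 -> yext L d y i = yext L d y j.

Definition blkP (R : realType) (L : nat) (d : nat -> nat) m (P : 'M[R]_(dmin L d)) : 'M[R]_m :=
  \matrix_(i, j) if ((i : nat) < dmin L d)%N && ((j : nat) < dmin L d)%N then mxn P i j
                 else ((i : nat) == j)%:R.

Definition inWset (R : realType) (L : nat) (d : nat -> nat) (lam : R) (y : nat -> R)
  (sig : 'cV[R]_(dmin L d)) (V : forall k, 'M[R]_(d k.+1, d k)) : Prop :=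
  match L with
  | n.+2 =>
    exists s : 'S_(dmin L d),
      inA lam y ((perm_mx s)^T *m sig) /\
    exists Q : forall k, 'M[R]_(d k),   (* Q k = paper's Q_{k+1} *)
      (forall k, (1 <= k <= n.+1)%N -> orth (Q k)) /\
    exists (O : 'M[R]_(d 0%N)) (Oh : 'M[R]_(d n.+2)),
      orth O /\ orth Oh /\ blockdiag L d y O /\ blockdiag L d y Oh /\
      (forall i j : nat, 0 < yext L d y i -> 0 < yext L d y j -> mxn O i j = mxn Oh i j) /\
      V 0%N = Q 1%N *m Sigmak sig 0 *m blkP (d 0%N) (perm_mx s) *m O /\
      (forall k, (1 <= k <= n)%N -> V k = Q k.+1 *m Sigmak sig k *m (Q k)^T) /\
      V n.+1 = Oh^T *m blkP (d n.+2) (perm_mx s)^T *m Sigmak sig n.+1 *m (Q n.+1)^T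
  | _ => False
  end.

Definition tdist (R : realType) (L : nat) (d : nat -> nat)
  (W V : forall k, 'M[R]_(d k.+1, d k)) : R :=
  Num.sqrt (\sum_(k < L) frob (W k - V k) ^+ 2).

Definition c1 (R : realType) (L : nat) (lam : R) m (sig : 'cV[R]_m) : R :=
  \big[Num.max/0]_(k < L)
    ((3 * sigmax sig / 2) ^+ (2 * L - 2)
       * ((L - k.+1) * (L - k.+1).+1 + k * k.+1)%N%:R / (2 * Num.sqrt 2 * lam) + 1 / 2).

(* Near the critical set every layer has spectral norm at most s = 3 sigma*_max / 2.
   With A = W_{L:l+1} and B = W_{l-1:1}, the left-hand side is half the l-th
   gradient block minus the defect A^T A W_l B B^T - (W_l W_l^T)^(L-1) W_l.
   The identity 2 lam (W_{j+1}^T W_{j+1} - W_j W_j^T) = W_{j+1}^T grad_{j+1} - grad_j W_j^T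
   makes consecutive layers balanced up to O(||grad G||); telescoping along the chain
   turns A^T A into (W_l W_l^T)^(L-l) and B B^T into (W_l^T W_l)^(l-1), the m-th step
   costing m balance defects, whence the triangular numbers in c_1. *)

From HB Require Import structures.
From mathcomp Require Import all_boot all_order all_algebra all_fingroup.
From mathcomp Require Import reals.
From mathcomp Require Import ring lra zify.
Set Implicit Arguments. Unset Strict Implicit. Unset Printing Implicit Defensive.
Import Order.TTheory GRing.Theory Num.Theory.
Local Open Scope ring_scope.

Section FrobeniusNorm.
Variable R : realType.

Lemma sqrtr_le (x y : R) : 0 <= y -> x <= y ^+ 2 -> Num.sqrt x <= y.
Proof. by move=> y0 h; rewrite -(ger0_norm y0) -sqrtr_sqr ler_sqrt // sqr_ge0. Qed.

Lemma ler_sqrtr (x y : R) : 0 <= x -> x ^+ 2 <= y -> x <= Num.sqrt y.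
Proof.
by move=> x0 h; rewrite -(ger0_norm x0) -sqrtr_sqr ler_sqrt // (le_trans (sqr_ge0 x)).
Qed.

Lemma sqr_sum_mul_le (I : finType) (a b : I -> R) :
  (\sum_i a i * b i) ^+ 2 <= (\sum_i a i ^+ 2) * (\sum_i b i ^+ 2).
Proof.
set c := \sum_i a i * b i; set sa := \sum_i a i ^+ 2; set sb := \sum_i b i ^+ 2.
have sa0 : 0 <= sa by apply: sumr_ge0 => i _; apply: sqr_ge0.
have [sa_eq0|sa_neq0] := eqVneq sa 0.
  have a0 i : a i = 0.
    apply/eqP; rewrite -sqrf_eq0; apply/eqP.
    by apply: (psumr_eq0P (P := xpredT) (F := fun i => a i ^+ 2)) => // j _; apply: sqr_ge0.
  by rewrite /c big1 ?expr0n ?sa_eq0 ?mul0r // => i _; rewrite a0 mul0r.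
have : 0 <= sa * (sa * sb - c ^+ 2).
  have <- : \sum_i (c * a i - sa * b i) ^+ 2 = sa * (sa * sb - c ^+ 2).
    transitivity (\sum_i (c ^+ 2 * a i ^+ 2 - 2 * c * sa * (a i * b i) + sa ^+ 2 * b i ^+ 2)).
      by apply: eq_bigr => i _; ring.
    rewrite !big_split sumrN /= -!mulr_sumr -/sa -/sb -/c; ring.
  by apply: sumr_ge0 => i _; apply: sqr_ge0.
by rewrite pmulr_rge0 ?subr_ge0 // lt_def sa_neq0.
Qed.

Definition sqfrob m n (A : 'M[R]_(m, n)) : R := \sum_i \sum_j A i j ^+ 2.

Lemma sqfrob_ge0 m n (A : 'M[R]_(m, n)) : 0 <= sqfrob A.
Proof. by apply: sumr_ge0 => i _; apply: sumr_ge0 => j _; apply: sqr_ge0. Qed.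

Lemma sqr_frob m n (A : 'M[R]_(m, n)) : frob A ^+ 2 = sqfrob A.
Proof. by rewrite sqr_sqrtr // sqfrob_ge0. Qed.

Lemma sqfrob_trace m n (A : 'M[R]_(m, n)) : sqfrob A = \tr (A *m A^T).
Proof.
by apply: eq_bigr => i _; rewrite mxE; apply: eq_bigr => j _; rewrite mxE expr2.
Qed.

Lemma frob_ge0 m n (A : 'M[R]_(m, n)) : 0 <= frob A.
Proof. exact: sqrtr_ge0. Qed.

Lemma frob0 m n : frob (0 : 'M[R]_(m, n)) = 0.
Proof. by rewrite /frob big1 ?sqrtr0 // => i _; rewrite big1 // => j _; rewrite mxE expr0n. Qed.

Lemma frob_tr m n (A : 'M[R]_(m, n)) : frob A^T = frob A.
Proof.
by rewrite /frob exchange_big; congr Num.sqrt; apply: eq_bigr => i _;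
  apply: eq_bigr => j _; rewrite mxE.
Qed.

Lemma frobZ m n a (A : 'M[R]_(m, n)) : frob (a *: A) = `|a| * frob A.
Proof.
rewrite /frob -sqrtr_sqr -sqrtrM ?sqr_ge0 // mulr_sumr; congr Num.sqrt.
by apply: eq_bigr => i _; rewrite mulr_sumr; apply: eq_bigr => j _; rewrite mxE exprMn.
Qed.

Lemma frobN m n (A : 'M[R]_(m, n)) : frob (- A) = frob A.
Proof. by rewrite -scaleN1r frobZ normrN normr1 mul1r. Qed.

Lemma sum_mul_le_frob m n (A B : 'M[R]_(m, n)) :
  \sum_i \sum_j A i j * B i j <= frob A * frob B.
Proof.
rewrite pair_big /=; apply: le_trans (ler_norm _) _.
rewrite -sqrtr_sqr -sqrtrM ?sqfrob_ge0 // ler_sqrt ?mulr_ge0 ?sqfrob_ge0 //.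
by rewrite /sqfrob !pair_big; apply: sqr_sum_mul_le.
Qed.

Lemma frobD m n (A B : 'M[R]_(m, n)) : frob (A + B) <= frob A + frob B.
Proof.
apply: sqrtr_le; first by rewrite addr_ge0 ?frob_ge0.
change (sqfrob (A + B) <= (frob A + frob B) ^+ 2).
have -> : sqfrob (A + B) = sqfrob A + 2 * (\sum_i \sum_j A i j * B i j) + sqfrob B.
  rewrite /sqfrob mulr_sumr -!big_split /=; apply: eq_bigr => i _.
  by rewrite mulr_sumr -!big_split /=; apply: eq_bigr => j _; rewrite mxE; ring.
by rewrite sqrrD !sqr_frob; have := sum_mul_le_frob A B; lra.
Qed.

Lemma frobB m n (A B : 'M[R]_(m, n)) : frob (A - B) <= frob A + frob B.
Proof. by rewrite -(frobN B); apply: frobD. Qed.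

Lemma frobM m n p (A : 'M[R]_(m, n)) (B : 'M[R]_(n, p)) :
  frob (A *m B) <= frob A * frob B.
Proof.
rewrite -sqrtrM ?sqfrob_ge0 // ler_sqrt ?mulr_ge0 ?sqfrob_ge0 //.
rewrite /sqfrob mulr_suml; apply: ler_sum => i _.
rewrite (exchange_big _ _ _ _ _ (fun k j => B k j ^+ 2)) mulr_sumr /=.
by apply: ler_sum => j _; rewrite mxE; apply: (sqr_sum_mul_le (A i) (B^~ j)).
Qed.

Lemma frob_orthmx m p (O : 'M[R]_m) (X : 'M[R]_(m, p)) : orth O -> frob (O *m X) = frob X.
Proof.
move=> /mulmx1C OTO; congr Num.sqrt; rewrite -!/(sqfrob _) !sqfrob_trace.
by rewrite trmx_mul -mulmxA mxtrace_mulC -!mulmxA OTO mulmx1.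
Qed.

Lemma frob_mxorth m p (O : 'M[R]_m) (X : 'M[R]_(p, m)) : orth O -> frob (X *m O) = frob X.
Proof.
move=> OOT; congr Num.sqrt; rewrite -!/(sqfrob _) !sqfrob_trace.
by rewrite trmx_mul -mulmxA (mulmxA O) OOT mul1mx.
Qed.

End FrobeniusNorm.

Section OperatorBound.
Variable R : realType.

(* [s] bounds the spectral norm of [M], expressed through the Frobenius norm
   on both sides, so that no singular values are needed. *)
Definition opbound (s : R) m n (M : 'M[R]_(m, n)) :=
  [/\ 0 <= s, forall p (X : 'M[R]_(n, p)), frob (M *m X) <= s * frob X
            & forall p (X : 'M[R]_(p, m)), frob (X *m M) <= s * frob X].

Lemma opbound_frob m n (M : 'M[R]_(m, n)) : opbound (frob M) M.
Proof.
split=> [|p X|p X]; first exact: frob_ge0; first exact: frobM.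
by rewrite mulrC; apply: frobM.
Qed.

Lemma opbound_le s t m n (M : 'M[R]_(m, n)) : s <= t -> opbound s M -> opbound t M.
Proof.
move=> st [s0 Ml Mr]; split=> [|p X|p X]; first exact: le_trans st.
- exact: le_trans (Ml _ X) (ler_wpM2r (frob_ge0 X) st).
- exact: le_trans (Mr _ X) (ler_wpM2r (frob_ge0 X) st).
Qed.

Lemma opboundM s t m n k (M : 'M[R]_(m, n)) (N : 'M[R]_(n, k)) :
  opbound s M -> opbound t N -> opbound (s * t) (M *m N).
Proof.
move=> [s0 Ml Mr] [t0 Nl Nr]; split=> [|p X|p X]; first exact: mulr_ge0.
- by rewrite -mulmxA -mulrA; apply: le_trans (Ml _ _) (ler_wpM2l s0 (Nl _ _)).
- by rewrite mulmxA [s * t]mulrC -mulrA; apply: le_trans (Nr _ _) (ler_wpM2l t0 (Mr _ _)).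
Qed.

Lemma opboundD s t m n (M N : 'M[R]_(m, n)) :
  opbound s M -> opbound t N -> opbound (s + t) (M + N).
Proof.
move=> [s0 Ml Mr] [t0 Nl Nr]; split=> [|p X|p X]; first exact: addr_ge0.
- by rewrite mulmxDl mulrDl; apply: le_trans (frobD _ _) (lerD (Ml _ _) (Nl _ _)).
- by rewrite mulmxDr mulrDl; apply: le_trans (frobD _ _) (lerD (Mr _ _) (Nr _ _)).
Qed.

Lemma opbound_tr s m n (M : 'M[R]_(m, n)) : opbound s M -> opbound s M^T.
Proof.
move=> [s0 Ml Mr]; split=> // p X; rewrite -frob_tr trmx_mul trmxK -(frob_tr X).
  exact: Mr.
exact: Ml.
Qed.

Lemma opbound1 n : opbound 1 (1%:M : 'M[R]_n).
Proof. by split=> // p X; rewrite ?mul1mx ?mulmx1 mul1r. Qed.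

Lemma opboundX s k n (M : 'M[R]_k) : opbound s M -> opbound (s ^+ n) (M ^+ n).
Proof.
move=> sM; elim: n => [|n IHn]; first by rewrite !expr0; apply: opbound1.
by rewrite !exprS -mulmxE; apply: opboundM.
Qed.

Lemma opbound_orth m (O : 'M[R]_m) : orth O -> opbound 1 O.
Proof. by move=> oO; split=> // p X; rewrite mul1r ?frob_orthmx ?frob_mxorth. Qed.

Definition supp_le1 (I : finType) (f : I -> R) :=
  forall k1 k2, f k1 != 0 -> f k2 != 0 -> k1 = k2.

Lemma sum_supp_le1 (I : finType) (f : I -> R) :
  supp_le1 f -> (forall k, f k = 0) \/ exists k0, \sum_k f k ^+ 2 = f k0 ^+ 2 /\
                                                  \sum_k f k = f k0.
Proof.
move=> f1; case: (pickP (fun k => f k != 0)) => [k0 fk0|f0]; last first.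
  by left=> k; apply/eqP/negbFE/f0.
have fk k : k != k0 -> f k = 0.
  by move=> kk0; apply/eqP; apply: contraNT kk0 => fk; apply/eqP; apply: f1.
right; exists k0; split; rewrite (bigD1 k0) //= big1 ?addr0 // => k /fk ->.
by rewrite expr0n.
Qed.

Lemma sqr_sum_supp_le1 (I : finType) (f : I -> R) :
  supp_le1 f -> (\sum_k f k) ^+ 2 = \sum_k f k ^+ 2.
Proof.
case/sum_supp_le1 => [f0|[k0 [-> ->]]] //.
by rewrite !big1 ?expr0n // => k _; rewrite f0 // expr0n.
Qed.

Lemma sum_sqr_supp_le1 (I : finType) (f : I -> R) c :
  supp_le1 f -> (forall k, `|f k| <= c) -> \sum_k f k ^+ 2 <= c ^+ 2.
Proof.
case/sum_supp_le1 => [f0|[k0 [-> _]]] fc.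
  by rewrite big1 ?sqr_ge0 // => k _; rewrite f0 expr0n.
have c0 : 0 <= c := le_trans (normr_ge0 _) (fc k0).
by rewrite -real_normK ?num_real // lerXn2r ?nnegrE ?normr_ge0.
Qed.

Definition monomial_mx m n (M : 'M[R]_(m, n)) :=
  (forall i, supp_le1 (M i)) /\ (forall j, supp_le1 (M^~ j)).

Lemma monomial_tr m n (M : 'M[R]_(m, n)) : monomial_mx M -> monomial_mx M^T.
Proof.
case=> Mr Mc; split=> i k1 k2; rewrite ?[M^T _ _]mxE; [exact: Mc | exact: Mr].
Qed.

Lemma frob_monomial_mul c m n p (M : 'M[R]_(m, n)) (X : 'M[R]_(n, p)) :
  monomial_mx M -> (forall i j, `|M i j| <= c) -> 0 <= c ->
  frob (M *m X) <= c * frob X.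
Proof.
move=> [Mr Mc] Mb c0; rewrite -(ger0_norm c0) -sqrtr_sqr -sqrtrM ?sqr_ge0 //.
rewrite ler_sqrt ?mulr_ge0 ?sqr_ge0 ?sqfrob_ge0 //.
change (sqfrob (M *m X) <= c ^+ 2 * sqfrob X).
have entry i j : (M *m X) i j ^+ 2 = \sum_k M i k ^+ 2 * X k j ^+ 2.
  rewrite mxE sqr_sum_supp_le1; first by apply: eq_bigr => k _; rewrite exprMn.
  by move=> k1 k2 h1 h2; apply: (Mr i); [move: h1 | move: h2];
    apply: contraNN => /eqP ->; rewrite mul0r.
have -> : sqfrob (M *m X) = \sum_k \sum_j \sum_i M i k ^+ 2 * X k j ^+ 2.
  rewrite /sqfrob (eq_bigr (fun i => \sum_k \sum_j M i k ^+ 2 * X k j ^+ 2)).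
    by rewrite exchange_big; apply: eq_bigr => k _; rewrite exchange_big.
  by move=> i _; rewrite (eq_bigr _ (fun j _ => entry i j)) exchange_big.
rewrite /sqfrob mulr_sumr; apply: ler_sum => k _; rewrite mulr_sumr.
apply: ler_sum => j _; rewrite -mulr_suml; apply: ler_wpM2r; first exact: sqr_ge0.
exact: sum_sqr_supp_le1 (Mc k) (Mb^~ k).
Qed.

Lemma opbound_monomial c m n (M : 'M[R]_(m, n)) :
  monomial_mx M -> (forall i j, `|M i j| <= c) -> 0 <= c -> opbound c M.
Proof.
move=> mM Mb c0; split=> // p X; first exact: frob_monomial_mul.
rewrite -frob_tr trmx_mul -(frob_tr X); apply: frob_monomial_mul => //.
  exact: monomial_tr.
by move=> i j; rewrite [M^T _ _]mxE.
Qed.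

End OperatorBound.

Section GramPowers.
Variable R : realType.

Lemma trmx_mul_Gram_exp m n (M : 'M[R]_(m, n)) k :
  M^T *m (M *m M^T) ^+ k = (M^T *m M) ^+ k *m M^T.
Proof.
elim: k => [|k IHk]; first by rewrite !expr0 mulmx1 mul1mx.
by rewrite !exprSr -!mulmxE !mulmxA IHk -!mulmxA.
Qed.

Lemma mul_Gram_exp m n (M : 'M[R]_(m, n)) k :
  M *m (M^T *m M) ^+ k = (M *m M^T) ^+ k *m M.
Proof. by have := trmx_mul_Gram_exp M^T k; rewrite trmxK. Qed.

Lemma trmx_Gram_exp_mul m n (M : 'M[R]_(m, n)) k :
  M^T *m (M *m M^T) ^+ k *m M = (M^T *m M) ^+ k.+1.
Proof. by rewrite trmx_mul_Gram_exp exprSr -mulmxE mulmxA. Qed.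

Lemma mul_Gram_exp_trmx m n (M : 'M[R]_(m, n)) k :
  M *m (M^T *m M) ^+ k *m M^T = (M *m M^T) ^+ k.+1.
Proof. by have := trmx_Gram_exp_mul M^T k; rewrite trmxK. Qed.

End GramPowers.

Section Products.
Variables (R : realType) (d : nat -> nat) (W : forall k, 'M[R]_(d k.+1, d k)).

Lemma prodWii i : prodW W i i = 1%:M.
Proof.
have eye1 m : eye R m m = 1%:M by apply/matrixP => p q; rewrite !mxE.
by case: i => [|i] /=; rewrite ?ltnn eye1.
Qed.

Lemma prodWS j i : (j <= i)%N -> prodW W j i.+1 = W i *m prodW W j i.
Proof. by move=> /= ->. Qed.

Lemma prodW_split j k i : (j <= k < i)%N ->
  prodW W j i = prodW W k.+1 i *m W k *m prodW W j k.
Proof.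
case/andP=> jk; elim: i => [|i IHi] // ki.
rewrite prodWS ?(leq_trans jk) //; case: (ltngtP k i) => [lt|gt|<-].
- by rewrite IHi // prodWS // !mulmxA.
- by move: ki; rewrite ltnS leqNgt gt.
- by rewrite prodWii mul1mx.
Qed.

Variables (L : nat) (lam : R) (y : nat -> R).
Local Notation gradk := (gradk L lam y W).

Lemma lhsk_gradk k : (k < L)%N ->
  lhsk L lam y W k = 2^-1 *: gradk k -
   ((prodW W k.+1 L)^T *m prodW W k.+1 L *m W k *m (prodW W 0 k *m (prodW W 0 k)^T)
     - (W k *m (W k)^T) ^+ (L - 1) *m W k).
Proof.
move=> kL; rewrite /lhsk /gradk (@prodW_split 0 k L) //.
rewrite scalerDr !scalerA mulVf ?pnatr_eq0 // scale1r mulrA mulVf ?pnatr_eq0 // mul1r.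
rewrite mulmxBr mulmxBl -!scalemxAr -scalemxAl !mulmxA.
by rewrite opprB [RHS]addrC !addrA subrK.
Qed.

Lemma balance_gradk j : (j.+1 < L)%N ->
  (2 * lam) *: ((W j.+1)^T *m W j.+1 - W j *m (W j)^T) =
  (W j.+1)^T *m gradk j.+1 - gradk j *m (W j)^T.
Proof.
move=> jL; rewrite /gradk (@prodW_split j.+1 j.+1 L) ?leqnn // prodWii mulmx1 prodWS //.
rewrite mulmxDr mulmxDl !trmx_mul -!scalemxAr -!scalemxAl !mulmxA scalerBr.
by rewrite opprD addrACA subrr add0r.
Qed.

End Products.

Definition trinum (R : realType) (n : nat) : R := (n * n.+1)%:R / 2.

Lemma trinum0 (R : realType) : trinum R 0 = 0.
Proof. by rewrite /trinum mul0n mul0r. Qed.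

Lemma trinumS (R : realType) n : trinum R n.+1 = trinum R n + n.+1%:R.
Proof.
rewrite /trinum (_ : (n.+1 * n.+2 = n * n.+1 + n.+1 * 2)%N); last by lia.
by rewrite natrD natrM; field.
Qed.

Lemma frob_exp_sub (R : realType) (a : R) n k (P Q : 'M[R]_k) :
  opbound a P -> opbound a Q ->
  frob (P ^+ n.+1 - Q ^+ n.+1) <= n.+1%:R * a ^+ n * frob (P - Q).
Proof.
move=> [a0 Pl _] aQ; elim: n => [|n IHn]; first by rewrite !expr1 expr0 !mul1r.
have [_ _ Qr] := opboundX n.+1 aQ.
have -> : P ^+ n.+2 - Q ^+ n.+2 = P *m (P ^+ n.+1 - Q ^+ n.+1) + (P - Q) *m Q ^+ n.+1.
  by rewrite exprS [Q ^+ n.+2]exprS -!mulmxE mulmxBr mulmxBl addrA subrK.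
apply: le_trans (frobD _ _) _; apply: le_trans (lerD (Pl _ _) (Qr _ _)) _.
have := ler_wpM2l a0 IHn; rewrite [a ^+ n.+1]exprS -natr1.
by have := frob_ge0 (P - Q); have := exprn_ge0 n a0; nra.
Qed.

Section BalancedChain.
Variables (R : realType) (d : nat -> nat) (W : forall k, 'M[R]_(d k.+1, d k)).
Variables (L : nat) (s eta : R).
Hypothesis s_ge0 : 0 <= s.
Hypothesis W_bound : forall k, (k < L)%N -> opbound s (W k).
Hypothesis W_balanced : forall j, (j.+1 < L)%N ->
  frob ((W j.+1)^T *m W j.+1 - W j *m (W j)^T) <= s * eta.

Local Notation tail k := (prodW W k.+1 L).
Local Notation head k := (prodW W 0 k).

Lemma opbound_Gram k : (k < L)%N -> opbound (s ^+ 2) ((W k)^T *m W k).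
Proof. by move=> kL; rewrite expr2; apply: opboundM; [apply: opbound_tr|]; apply: W_bound. Qed.

Lemma opbound_Gram_tr k : (k < L)%N -> opbound (s ^+ 2) (W k *m (W k)^T).
Proof. by move=> kL; rewrite expr2; apply: opboundM; [|apply: opbound_tr]; apply: W_bound. Qed.

Lemma opbound_head k : (k <= L)%N -> opbound (s ^+ k) (head k).
Proof.
elim: k => [|k IHk] kL; first by rewrite prodWii expr0; apply: opbound1.
by rewrite prodWS // exprS; apply: opboundM; [apply: W_bound | apply: IHk; lia].
Qed.

Lemma frob_sandwich m n (E : 'M[R]_m) (M : 'M[R]_(m, n)) :
  opbound s M -> frob (M^T *m E *m M) <= s ^+ 2 * frob E.
Proof.
move=> sM; have [_ _ Mr] := sM; have [_ MTl _] := opbound_tr sM.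
by rewrite expr2 -mulrA; apply: le_trans (Mr _ _) (ler_wpM2l s_ge0 (MTl _ _)).
Qed.

(* All chain estimates are multiplied by [s], which keeps the exponent of [s]
   a natural number even for the empty products. *)
Lemma chain_step (x e p S : R) m :
  s * x <= trinum R m * S * eta -> e <= s ^+ 2 * x ->
  s * p <= m.+1%:R * (s ^+ 2 * S) * eta ->
  s * (e + p) <= trinum R m.+1 * (s ^+ 2 * S) * eta.
Proof.
move=> hx he hp; rewrite mulrDr trinumS.
have s20 : 0 <= s ^+ 2 := sqr_ge0 s.
have := ler_wpM2l s_ge0 he; have := ler_wpM2l s20 hx; nra.
Qed.

Lemma chain_exp_sub n (p f : R) :
  p <= n.+1%:R * s ^+ 2 ^+ n * f -> f <= s * eta ->
  s * p <= n.+1%:R * (s ^+ 2 * s ^+ (2 * n)) * eta.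
Proof.
rewrite -exprM => hp hf; apply: le_trans (ler_wpM2l s_ge0 hp) _.
have nS0 : 0 <= n.+1%:R * s ^+ (2 * n) by rewrite mulr_ge0 ?exprn_ge0.
by have := ler_wpM2l nS0 (ler_wpM2l s_ge0 hf); rewrite expr2; nra.
Qed.

Lemma frob_tail_Gram m k : (k + m.+1 = L)%N ->
  s * frob ((tail k)^T *m tail k - (W k *m (W k)^T) ^+ m) <= trinum R m * s ^+ (2 * m) * eta.
Proof.
elim: m k => [|m IHm] k km.
  by rewrite -km addn1 prodWii trmx1 mulmx1 expr0 subrr frob0 mulr0 trinum0 !mul0r.
have kL : (k.+1 < L)%N by lia.
have -> : tail k = tail k.+1 *m W k.+1.
  by rewrite (@prodW_split _ _ W k.+1 k.+1) ?prodWii ?mulmx1 ?leqnn.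
set E := (tail k.+1)^T *m tail k.+1 - (W k.+1 *m (W k.+1)^T) ^+ m.
have -> : (tail k.+1 *m W k.+1)^T *m (tail k.+1 *m W k.+1) - (W k *m (W k)^T) ^+ m.+1 =
   (W k.+1)^T *m E *m W k.+1 + (((W k.+1)^T *m W k.+1) ^+ m.+1 - (W k *m (W k)^T) ^+ m.+1).
  by rewrite trmx_mul /E mulmxBr mulmxBl trmx_Gram_exp_mul !mulmxA addrA subrK.
have hp := frob_exp_sub m (opbound_Gram kL) (opbound_Gram_tr (ltnW kL)).
rewrite (_ : (2 * m.+1 = 2 + 2 * m)%N) 1?exprD //; last by lia.
apply: le_trans (ler_wpM2l s_ge0 (frobD _ _)) _.
apply: chain_step (IHm k.+1 _) (frob_sandwich _ (W_bound kL)) _; first by lia.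
exact: chain_exp_sub hp (W_balanced kL).
Qed.

Lemma frob_head_Gram k : (k < L)%N ->
  s * frob (head k *m (head k)^T - ((W k)^T *m W k) ^+ k) <= trinum R k * s ^+ (2 * k) * eta.
Proof.
elim: k => [|k IHk] kL.
  by rewrite prodWii trmx1 mulmx1 expr0 subrr frob0 mulr0 trinum0 !mul0r.
have kL' : (k < L)%N by lia.
set E := head k *m (head k)^T - ((W k)^T *m W k) ^+ k in IHk *.
have -> : head k.+1 *m (head k.+1)^T - ((W k.+1)^T *m W k.+1) ^+ k.+1 =
   W k *m E *m (W k)^T + ((W k *m (W k)^T) ^+ k.+1 - ((W k.+1)^T *m W k.+1) ^+ k.+1).
  by rewrite prodWS // trmx_mul /E mulmxBr mulmxBl mul_Gram_exp_trmx !mulmxA addrA subrK.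
have hp := frob_exp_sub k (opbound_Gram_tr kL') (opbound_Gram kL).
rewrite (_ : (2 * k.+1 = 2 + 2 * k)%N) 1?exprD //; last by lia.
apply: le_trans (ler_wpM2l s_ge0 (frobD _ _)) _.
apply: chain_step (IHk kL') _ _.
  by have := frob_sandwich E (opbound_tr (W_bound kL')); rewrite trmxK.
by apply: chain_exp_sub hp _; rewrite -opprB frobN W_balanced.
Qed.

Lemma frob_lhsk_defect k : (k < L)%N ->
  frob ((tail k)^T *m tail k *m W k *m (head k *m (head k)^T)
        - (W k *m (W k)^T) ^+ (L - 1) *m W k)
   <= (trinum R (L - k.+1) + trinum R k) * s ^+ (2 * (L - 1)) * eta.
Proof.
move=> kL; set a := (L - k.+1)%N.
have h1 := @frob_tail_Gram a k ltac:(lia); have h2 := frob_head_Gram kL.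
set Q := W k *m (W k)^T in h1 *; set P := (W k)^T *m W k in h2 *.
set E1 := _ - Q ^+ a in h1; set E2 := _ - P ^+ k in h2.
have -> : (tail k)^T *m tail k *m W k *m (head k *m (head k)^T) - Q ^+ (L - 1) *m W k =
    E1 *m (W k *m (head k *m (head k)^T)) + Q ^+ a *m W k *m E2.
  have QWP : Q ^+ a *m W k *m P ^+ k = Q ^+ (L - 1) *m W k.
    by rewrite -mulmxA mul_Gram_exp mulmxA (_ : (L - 1 = a + k)%N) ?exprD //; lia.
  by rewrite /E1 /E2 mulmxBl mulmxBr !mulmxA QWP addrA subrK.
have [_ _ hM] : opbound (s * (s ^+ k * s ^+ k)) (W k *m (head k *m (head k)^T)).
  apply: opboundM; first exact: W_bound.
  by apply: opboundM; [|apply: opbound_tr]; apply: opbound_head; lia.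
have [_ hN _] : opbound ((s ^+ 2) ^+ a * s) (Q ^+ a *m W k).
  by apply: opboundM; [apply: opboundX; apply: opbound_Gram_tr | apply: W_bound].
apply: le_trans (frobD _ _) _; apply: le_trans (lerD (hM _ E1) (hN _ E2)) _.
rewrite -exprD -exprM addnn -mul2n (_ : (2 * (L - 1) = 2 * a + 2 * k)%N); last by lia.
rewrite (exprD s (2 * a)).
have g1 := ler_wpM2l (exprn_ge0 (2 * k) s_ge0) h1.
have g2 := ler_wpM2l (exprn_ge0 (2 * a) s_ge0) h2.
move: g1 g2; set Sa := s ^+ (2 * a); set Sk := s ^+ (2 * k).
set Ta := trinum R a; set Tk := trinum R k; set x := frob E1; set z := frob E2.
nra.
Qed.

Lemma frob_lhsk_le lam y k : (k < L)%N ->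
  frob (lhsk L lam y W k) <= 2^-1 * frob (gradk L lam y W k)
     + (trinum R (L - k.+1) + trinum R k) * s ^+ (2 * (L - 1)) * eta.
Proof.
move=> kL; rewrite lhsk_gradk //; apply: le_trans (frobB _ _) _.
by rewrite frobZ ger0_norm ?invr_ge0 ?ler0n // lerD // frob_lhsk_defect.
Qed.

End BalancedChain.

Section CriticalSet.
Variable R : realType.

Lemma monomial_mx_inj (T : eqType) (f : nat -> T) (g : nat -> T) m n (M : 'M[R]_(m, n)) :
  injective f -> injective g -> (forall i j, M i j != 0 -> f i = g j) -> monomial_mx M.
Proof.
move=> f_inj g_inj Mfg; split=> [i j1 j2 /Mfg e1 /Mfg e2 | j i1 i2 /Mfg e1 /Mfg e2].
  by apply/val_inj/g_inj; rewrite -e1 -e2.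
by apply/val_inj/f_inj; rewrite e1 e2.
Qed.

Lemma sigmax_ge0 m (sig : 'cV[R]_m) : 0 <= sigmax sig.
Proof. exact: bigmax_ge_id. Qed.

Lemma le_sigmax m (sig : 'cV[R]_m) i : sig i 0 <= sigmax sig.
Proof. exact: (le_bigmax 0 (fun i : 'I_m => sig i 0)). Qed.

Lemma sigmin_le_sigmax m (sig : 'cV[R]_m) : sigmin sig <= sigmax sig.
Proof. exact: bigmin_le_id. Qed.

Lemma opbound_Sigmak L d (sig : 'cV[R]_(dmin L d)) k :
  (forall i, 0 <= sig i 0) -> opbound (sigmax sig) (Sigmak sig k).
Proof.
move=> sig0; apply: opbound_monomial (sigmax_ge0 sig).
  apply: (@monomial_mx_inj _ id id) => // i j.
  by rewrite mxE; case: ifP => [/eqP -> // | _]; rewrite eqxx.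
move=> i j; rewrite mxE; case: ifP => _; last by rewrite normr0 sigmax_ge0.
rewrite /vn; case: insubP => [i' _ _|_]; last by rewrite normr0 sigmax_ge0.
by rewrite ger0_norm ?le_sigmax.
Qed.

Definition ext_perm n (t : 'S_n) (i : nat) : nat :=
  if insub i is Some i' then val (t i') else i.

Lemma ext_perm_inj n (t : 'S_n) : injective (ext_perm t).
Proof.
rewrite /ext_perm => i1 i2.
case: insubP => [i1' _ <-|/negbTE i1n]; case: insubP => [i2' _ <-|/negbTE i2n] //.
- by move/val_inj/perm_inj ->.
- by move=> e; move: i2n; rewrite -e ltn_ord.
- by move=> e; move: i1n; rewrite e ltn_ord.
Qed.

Lemma blkP_perm_neq0 L d m (t : 'S_(dmin L d)) (i j : 'I_m) :
  @blkP R L d m (perm_mx t) i j != 0 -> ext_perm t i = j.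
Proof.
rewrite mxE /ext_perm /mxn.
case: insubP => [i' /= i_lt ei|/negbTE ->]; last first.
  by case: ((i : nat) =P j) => //= _; rewrite eqxx.
case: insubP => [j' /= j_lt ej|/negbTE j_ge].
  rewrite i_lt j_lt perm_mxEsub !mxE -ej /=.
  by case: (t i' =P j') => [-> // | _]; rewrite eqxx.
rewrite j_ge andbF /=; case: ((i : nat) =P j) => [eij _ | _]; last by rewrite eqxx.
by move: j_ge; rewrite -eij i_lt.
Qed.

Lemma opbound_blkP_perm L d m (t : 'S_(dmin L d)) : opbound 1 (@blkP R L d m (perm_mx t)).
Proof.
apply: opbound_monomial ler01.
  apply: (@monomial_mx_inj _ (ext_perm t) id) => //; first exact: ext_perm_inj.
  exact: blkP_perm_neq0.
have bit_le1 (b : bool) : `|b%:R : R| <= 1 by case: b; rewrite ?normr1 ?normr0.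
move=> i j; rewrite mxE; case: ifP => _ //; rewrite /mxn.
case: (@insubP _ _ 'I_(dmin L d) i) => [i' _ _|_]; rewrite ?normr0 ?ler01 //.
case: (@insubP _ _ 'I_(dmin L d) j) => [j' _ _|_]; rewrite ?normr0 ?ler01 //.
by rewrite perm_mxEsub !mxE.
Qed.

Lemma opbound_inWset n d lam y (sig : 'cV[R]_(dmin n.+2 d)) V k :
  inWset lam y sig V -> (forall i, 0 <= sig i 0) -> (k < n.+2)%N ->
  opbound (sigmax sig) (V k).
Proof.
move=> [t [_ [Q [Qorth [O [Oh [Oorth [Ohorth [_ [_ [_ [V0 [Vk VL]]]]]]]]]]]]] sig0 kL.
have Sk j := opbound_Sigmak j sig0.
have Qb j : (1 <= j <= n.+1)%N -> opbound 1 (Q j) by move/Qorth/opbound_orth.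
case: k kL => [|k] kL.
  have := opboundM (opboundM (opboundM (Qb 1%N isT) (Sk 0%N)) (opbound_blkP_perm _ t))
                   (opbound_orth Oorth).
  by rewrite V0 mul1r !mulr1.
have [->|kn] := eqVneq k n.
  have := opboundM (opboundM (opboundM (opbound_tr (opbound_orth Ohorth))
    (opbound_blkP_perm _ t^-1)) (Sk n.+1)) (opbound_tr (Qb n.+1 _)).
  by rewrite VL tr_perm_mx !mul1r mulr1; apply; lia.
have := opboundM (opboundM (Qb k.+2 _) (Sk k.+1)) (opbound_tr (Qb k.+1 _)).
by rewrite Vk ?mul1r ?mulr1; [apply; lia | lia].
Qed.

Lemma inAsort_ge0 L d lam y (sig : 'cV[R]_(dmin L d)) :
  inAsort lam y sig -> forall i, 0 <= sig i 0.
Proof. by case=> _ [a [aA [t at_]]] i; rewrite at_; case: (aA (t i)). Qed.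

End CriticalSet.

Section GradientBound.
Variable R : realType.

Lemma ler_sqrt_sum_sqr (I : finType) (F : I -> R) i :
  0 <= F i -> F i <= Num.sqrt (\sum_j F j ^+ 2).
Proof.
move=> Fi0; apply: ler_sqrtr => //.
by rewrite (bigD1 i) //= lerDl sumr_ge0 // => j _; apply: sqr_ge0.
Qed.

Lemma lerD_sqrt_sum_sqr (I : finType) (F : I -> R) i j : i != j ->
  0 <= F i -> 0 <= F j -> F i + F j <= Num.sqrt 2 * Num.sqrt (\sum_k F k ^+ 2).
Proof.
move=> ij Fi0 Fj0; rewrite -sqrtrM ?ler0n //; apply: ler_sqrtr; first exact: addr_ge0.
have : F i ^+ 2 + F j ^+ 2 <= \sum_k F k ^+ 2.
  rewrite (bigD1 i) //= (bigD1 j) 1?eq_sym //= addrA lerDl.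
  by apply: sumr_ge0 => k _; apply: sqr_ge0.
by have := sqr_ge0 (F i - F j); nra.
Qed.

Variables (d : nat -> nat) (W : forall k, 'M[R]_(d k.+1, d k)).
Variables (L : nat) (lam : R) (y : nat -> R).
Local Notation gradk := (gradk L lam y W).
Local Notation gradnorm := (gradnorm L lam y W).

Lemma frob_gradk_le k : (k < L)%N -> frob (gradk k) <= gradnorm.
Proof.
move=> kL; apply: (ler_sqrt_sum_sqr (F := fun k : 'I_L => frob (gradk k)) (i := Ordinal kL)).
exact: frob_ge0.
Qed.

Lemma frob_gradk_pair_le j : (j.+1 < L)%N ->
  frob (gradk j.+1) + frob (gradk j) <= Num.sqrt 2 * gradnorm.
Proof.
move=> jL; have ne : Ordinal jL != Ordinal (ltnW jL) by rewrite -val_eqE /= gtn_eqF.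
exact: (lerD_sqrt_sum_sqr (F := fun k : 'I_L => frob (gradk k)) ne) (frob_ge0 _) (frob_ge0 _).
Qed.

Lemma frob_balance_le s j : 0 < lam -> (j.+1 < L)%N ->
  opbound s (W j.+1) -> opbound s (W j) ->
  frob ((W j.+1)^T *m W j.+1 - W j *m (W j)^T) <= s * (Num.sqrt 2 * gradnorm / (2 * lam)).
Proof.
move=> lam0 jL sWj1 sWj; have lam20 : 0 < 2 * lam by rewrite mulr_gt0.
have [s0 _ _] := sWj; have [_ Tl _] := opbound_tr sWj1; have [_ _ Tr] := opbound_tr sWj.
rewrite mulrA ler_pdivlMr // mulrC -[X in X * _](gtr0_norm lam20) -frobZ.
rewrite (balance_gradk W lam y jL).
apply: le_trans (frobB _ _) _; apply: le_trans (lerD (Tl _ _) (Tr _ _)) _.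
by rewrite -mulrDr ler_wpM2l // frob_gradk_pair_le.
Qed.

Lemma frob_lhsk_le_gradnorm s k : 0 < lam -> 0 <= s ->
  (forall k, (k < L)%N -> opbound s (W k)) -> (k < L)%N ->
  frob (lhsk L lam y W k) <=
    (s ^+ (2 * L - 2) * ((L - k.+1) * (L - k.+1).+1 + k * k.+1)%N%:R
       / (2 * Num.sqrt 2 * lam) + 1 / 2) * gradnorm.
Proof.
move=> lam0 s0 Wb kL.
have bal j (jL : (j.+1 < L)%N) := frob_balance_le lam0 jL (Wb _ jL) (Wb _ (ltnW jL)).
apply: le_trans (frob_lhsk_le s0 Wb bal lam y kL) _.
rewrite [X in _ <= X]mulrDl [X in _ <= X]addrC; apply: lerD.
  by rewrite div1r ler_wpM2l ?invr_ge0 ?ler0n ?frob_gradk_le.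
set r := Num.sqrt 2; have r0 : r != 0 by rewrite sqrtr_eq0 -ltNge ltr0n.
have -> : r * gradnorm / (2 * lam) = 2 * gradnorm / (2 * r * lam).
  by rewrite -{2}[2](@sqr_sqrtr _ 2) ?ler0n // -/r; field; rewrite r0 gt_eqF.
rewrite (_ : (2 * L - 2 = 2 * (L - 1))%N); last by lia.
rewrite le_eqVlt; apply/orP; left; apply/eqP.
by rewrite /trinum natrD; field; rewrite r0 gt_eqF.
Qed.

End GradientBound.

Unset Implicit Arguments.

Theorem corollary3p6 (R : realType) (L : nat) (d : nat -> nat) (lam : R) (y : nat -> R)
  (sig : 'cV[R]_(dmin L d)) (W : forall k, 'M[R]_(d k.+1, d k)) :
  (2 <= L)%N ->
  0 < lam ->
  (forall i j : nat, (i <= j)%N -> (j < dmin L d)%N -> y j <= y i) ->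
  (forall i : nat, (i < dmin L d)%N -> 0 <= y i) ->
  (forall k : nat, (0 < k < L)%N -> (dmin L d <= d k)%N) ->
  inAsort lam y sig ->
  sig != 0 ->
  (exists V, inWset lam y sig V /\ tdist L W V < sigmin sig / 2) ->
  forall l : 'I_L,
    frob (lhsk L lam y W l) <= c1 L lam sig * gradnorm L lam y W.
Proof.
move=> L2 lam0 _ _ _ sig_sort _ [V [WV WV_near]] l.
have [n eL] : exists n, L = n.+2 by exists L.-2; lia.
subst L; have sig0 := inAsort_ge0 sig_sort.
set s := 3 * sigmax sig / 2.
have Wb k : (k < n.+2)%N -> opbound s (W k).
  move=> kL; rewrite -[W k](subrK (V k)).
  apply: opbound_le (opboundD (opbound_frob _) (opbound_inWset WV sig0 kL)).
  have : frob (W k - V k) <= tdist n.+2 W V.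
    apply: (ler_sqrt_sum_sqr (F := fun k : 'I_n.+2 => frob (W k - V k)) (i := Ordinal kL)).
    exact: frob_ge0.
  by have := sigmin_le_sigmax sig; rewrite /s; lra.
apply: le_trans (frob_lhsk_le_gradnorm y lam0 _ Wb (ltn_ord l)) _.
  by rewrite /s; have := sigmax_ge0 sig; lra.
apply: ler_wpM2r; first exact: sqrtr_ge0.
exact: (le_bigmax 0 (fun k : 'I_n.+2 => _) l).
Qed.
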